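(* Let $\mathcal{T}$ be an unweighted tree on $L$ vertices such that (a) there is a vertex of degree $\ge 2$ from which all leaves are at the same distance, and (b) every other non-leaf vertex has degree $\ge 3$ (e.g. a complete binary tree). Let $f:\mathbb{N}\to\mathbb{R}$ be arbitrary. Then for every $\mathbf{x}\in\mathbb{R}^L$, the product $\mathbf{M}\mathbf{x}$ with $\mathbf{M} = [f(\mathrm{dist}_{\mathcal{T}}(i,j))]_{i,j=1,\dots,L}$ can be computed in time $O(L\log L)$.
   Context: $\mathrm{dist}_{\mathcal{T}}(i,j)$ is the number of edges on the path between $i$ and $j$. Values of $f$ are assumed available in $O(1)$ time each; time counts arithmetic operations. *)

From HB Require Import structures.
From mathcomp Require Import all_boot all_order all_algebra.
From mathcomp Require Import Rstruct.
From Stdlib Require Rdefinitions.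
Notation R := Rdefinitions.R.
Set Implicit Arguments. Unset Strict Implicit. Unset Printing Implicit Defensive.
Import Order.TTheory GRing.Theory Num.Theory.
Local Open Scope ring_scope.

Definition simple_graph (L : nat) (e : rel 'I_L) : Prop :=
  symmetric e /\ irreflexive e.

(* a tree: connected simple graph with exactly L-1 (undirected) edges *)
Definition is_tree (L : nat) (e : rel 'I_L) : Prop :=
  simple_graph e /\ (forall i j : 'I_L, connect e i j) /\
  #|[set p : 'I_L * 'I_L | e p.1 p.2]| = (2 * L.-1)%N.

Definition deg (L : nat) (e : rel 'I_L) (v : 'I_L) : nat := #|[set u | e v u]|.

Fixpoint ball (L : nat) (e : rel 'I_L) (n : nat) (i : 'I_L) : {set 'I_L} :=
  match n with
  | 0 => [set i]
  | n.+1 => ball e n i :|: [set y | [exists x in ball e n i, e x y]]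
  end.

(* graph distance = number of edges on a shortest path (for connected graphs;
   for a tree this is the number of edges on the unique path) *)
Definition dist (L : nat) (e : rel 'I_L) (i j : 'I_L) : nat :=
  #|[set n : 'I_L | j \notin ball e n i]|.

(* Registers are numbered by instruction order; operands refer to registers. *)
Inductive instr : Type :=
  | IInput of nat
  | IOracle of nat
  | IConst of R
  | IAdd of nat & nat
  | ISub of nat & nat
  | IMul of nat & nat
  | IDiv of nat & nat.

Definition exec_instr (L : nat) (f : nat -> R) (x : 'cV[R]_L)
  (regs : seq R) (c : instr) : R :=
  let rd k := nth 0 regs k in
  match c with
  | IInput k => if insub k is Some k' then x k' ord0 else 0
  | IOracle k => f k
  | IConst a => a
  | IAdd a b => rd a + rd b
  | ISub a b => rd a - rd b
  | IMul a b => rd a * rd b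
  | IDiv a b => rd a / rd b
  end.

Definition run (L : nat) (f : nat -> R) (x : 'cV[R]_L) (p : seq instr) : seq R :=
  foldl (fun regs c => rcons regs (exec_instr f x regs c)) [::] p.

Record program (L : nat) := Program {
  instrs : seq instr;
  outreg : 'I_L -> nat
}.

Definition prog_size (L : nat) (P : program L) : nat := size (instrs P).

Definition prog_eval (L : nat) (P : program L) (f : nat -> R) (x : 'cV[R]_L)
  : 'cV[R]_L :=
  \col_i nth 0 (run f x (instrs P)) (outreg P i).

Definition dist_matrix (L : nat) (e : rel 'I_L) (f : nat -> R) : 'M[R]_L :=
  \matrix_(i, j) f (dist e i j).

(* Let V_k(i) be the sum of the x_j over the vertices j at distance k from i,
   so that (M x)_i = sum_k f(k) V_k(i), k ranging up to the diameter.  In a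
   tree, among the neighbours u of i exactly one (the first vertex on the path
   to j) is one step closer to j, the others are one step further; summing
   V_k over the neighbours of i therefore gives V_(k+1)(i) plus a multiple of
   V_(k-1)(i), and each level V_(k+1) costs O(L) operations because a tree has
   L - 1 edges.  Under the hypotheses every vertex at depth t < d from the
   centre r has at least two children, so level t has at least 2^t vertices:
   2^d <= L, and the 2d levels up to the diameter cost O(L log L). *)

From HB Require Import structures.
From mathcomp Require Import all_boot all_order all_algebra.
From mathcomp Require Import Rstruct zify.
Import GRing.Theory.
Set Implicit Arguments. Unset Strict Implicit. Unset Printing Implicit Defensive.

(** * Distances in a connected graph *)

Lemma card_ord_ltn L n : #|[set m : 'I_L | m < n]| = minn n L.
Proof.
rewrite -sum1dep_card -(big_mkord (fun m => m < n) (fun _ => 1%N)) big_mkcond /=.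
elim: L => [|L IH]; first by rewrite big_geq ?minn0.
by rewrite big_nat_recr //= IH; case: ltnP; lia.
Qed.

Section Distance.
Variables (L : nat) (e : rel 'I_L).

Lemma ball_center n i : i \in ball e n i.
Proof. by elim: n => [|n IH] /=; rewrite ?in_set1 ?in_setU ?IH. Qed.

Lemma subset_ball m n i : m <= n -> ball e m i \subset ball e n i.
Proof.
move=> /subnK <-; elim: (n - m) => [|k IH] //=.
exact: subset_trans IH (subsetUl _ _).
Qed.

Lemma ball_edge n i x y : x \in ball e n i -> e x y -> y \in ball e n.+1 i.
Proof.
by move=> xi xy; rewrite /= in_setU in_set; apply/orP; right; apply/existsP; exists x; rewrite xi.
Qed.

Lemma ballSP n i y :
  y \in ball e n.+1 i -> y \in ball e n i \/ exists2 x, x \in ball e n i & e x y.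
Proof.
by rewrite /= in_setU in_set => /orP[|/existsP[x /andP[]]]; [left | right; exists x].
Qed.

Lemma ball_trans m n a b c :
  b \in ball e m a -> c \in ball e n b -> c \in ball e (m + n) a.
Proof.
move=> ba; elim: n c => [|n IH] c; first by rewrite /= in_set1 addn0 => /eqP ->.
rewrite addnS => /ballSP[/IH | [y /IH ya yc]]; last exact: ball_edge ya yc.
by apply/subsetP/subset_ball.
Qed.

Lemma ball_first n i j :
  j \in ball e n.+1 i -> j = i \/ exists2 u, e i u & j \in ball e n u.
Proof.
elim: n j => [|n IH] j.
  case/ballSP => [|[y]]; rewrite /= in_set1 => /eqP; first by left.
  by move=> -> ij; right; exists j; rewrite ?in_set1.
case/ballSP => [/IH[-> | [u iu ju]] | [y /IH[-> | [u iu yu]] yj]]; [by left | | | ].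
- by right; exists u => //; apply/subsetP: ju; apply: subset_ball.
- by right; exists j => //; apply: ball_center.
- by right; exists u => //; apply: ball_edge yu yj.
Qed.

Hypothesis e_sym : symmetric e.

Lemma ball_sym n i j : j \in ball e n i -> i \in ball e n j.
Proof.
elim: n i j => [|n IH] i j; first by rewrite /= !in_set1 eq_sym.
case/ball_first => [-> | [u iu /IH ju]]; first exact: ball_center.
by apply: ball_edge ju _; rewrite e_sym.
Qed.

Lemma ball_path i p : path e i p -> last i p \in ball e (size p) i.
Proof.
elim: p i => [|y p IH] i; first by rewrite in_set1.
rewrite [path _ _ _]/= => /andP[iy /IH]; apply: (@ball_trans 1).
exact: ball_edge (ball_center 0 i) iy.
Qed.

Hypothesis e_conn : forall i j : 'I_L, connect e i j.

Lemma ball_full i j : j \in ball e L.-1 i.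
Proof.
have /connectP[p /shortenP[q q_path q_uniq _] ->] := e_conn i j.
apply/subsetP: (ball_path q_path); apply: subset_ball.
have := max_card (mem (i :: q)); rewrite card_ord (card_uniqP q_uniq) /=; lia.
Qed.

Local Notation D := (dist e).

Lemma mem_ball_dist n i j : (j \in ball e n i) = (D i j <= n).
Proof.
apply/idP/idP => [jn | ].
  rewrite /dist; apply: leq_trans (_ : #|[set m : 'I_L | m < n]| <= n); last first.
    by rewrite card_ord_ltn geq_minl.
  apply/subset_leq_card/subsetP => m; rewrite !in_set ltnNge; apply: contraNN => nm.
  by apply/subsetP: jn; apply: subset_ball.
apply: contraTT => jn; rewrite -ltnNge.
have nL : n < L.-1.
  rewrite ltnNge; apply: contraNN jn => Ln.
  by apply/subsetP: (ball_full i j); apply: subset_ball.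
rewrite /dist; apply: leq_trans (_ : #|[set m : 'I_L | m < n.+1]| <= _).
  by rewrite card_ord_ltn; lia.
apply/subset_leq_card/subsetP => m; rewrite !in_set ltnS => mn.
by apply: contraNN jn => jm; apply/subsetP: jm; apply: subset_ball.
Qed.

Lemma dist_refl i : D i i = 0.
Proof. by apply/eqP; rewrite -leqn0 -mem_ball_dist ball_center. Qed.

Lemma dist_eq0 i j : D i j = 0 -> j = i.
Proof. by move/eqP; rewrite -leqn0 -mem_ball_dist /= in_set1 => /eqP. Qed.

Lemma distC i j : D i j = D j i.
Proof.
apply/eqP; rewrite eqn_leq -!mem_ball_dist.
by apply/andP; split; apply: ball_sym; rewrite mem_ball_dist.
Qed.

Lemma dist_triangle a b c : D a c <= D a b + D b c.
Proof. by rewrite -mem_ball_dist; apply: ball_trans; rewrite mem_ball_dist. Qed.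

Lemma dist_edge a b c : e b c -> D a c <= (D a b).+1.
Proof. by move=> bc; rewrite -mem_ball_dist; apply: ball_edge bc; rewrite mem_ball_dist. Qed.

Lemma dist_pred_edge a b : b != a -> exists2 c, e c b & (D a c).+1 = D a b.
Proof.
move=> ba; case Dab: (D a b) => [|n]; first by rewrite (dist_eq0 Dab) eqxx in ba.
have : b \in ball e n.+1 a by rewrite mem_ball_dist Dab.
case/ballSP => [| [c]]; first by rewrite mem_ball_dist Dab ltnn.
rewrite mem_ball_dist => ca cb; exists c => //.
by have := dist_edge a cb; rewrite Dab; lia.
Qed.

End Distance.

(** * Trees: neighbours and spheres *)

Definition nbhd (L : nat) (e : rel 'I_L) (i : 'I_L) : {set 'I_L} := [set u | e i u].

Lemma card_nbhd L (e : rel 'I_L) i : #|nbhd e i| = deg e i.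
Proof. by []. Qed.

Lemma sum_deg L (e : rel 'I_L) : \sum_i deg e i = #|[set p : 'I_L * 'I_L | e p.1 p.2]|.
Proof.
rewrite /deg; under eq_bigr do rewrite -sum1dep_card.
by rewrite pair_big_dep /= sum1dep_card.
Qed.

Section Tree.
Variables (L : nat) (e : rel 'I_L).
Hypotheses (e_sym : symmetric e) (e_irr : irreflexive e).
Hypothesis e_conn : forall i j : 'I_L, connect e i j.
Local Notation D := (dist e).

Definition parent (a b : 'I_L) : 'I_L :=
  odflt a [pick c | e c b && ((D a c).+1 == D a b)].

Lemma parentP a b : b != a -> e (parent a b) b /\ (D a (parent a b)).+1 = D a b.
Proof.
case/(dist_pred_edge e_conn) => c cb Dc; rewrite /parent.
by case: pickP => [y /andP[yb /eqP] | /(_ c)] //=; rewrite cb Dc eqxx.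
Qed.

Lemma parent_self a : parent a a = a.
Proof. by rewrite /parent; case: pickP => [c /andP[_ /eqP] | ]; rewrite ?(dist_refl e_conn). Qed.

Hypothesis e_card : #|[set p : 'I_L * 'I_L | e p.1 p.2]| = (2 * L.-1)%N.

(* The pairs (y, parent a y) and (parent a y, y), y <> a, are 2 (L - 1) distinct
   edges, hence all of them. *)
Lemma edge_parent a b c : e b c ->
  (b != a /\ c = parent a b) \/ (c != a /\ b = parent a c).
Proof.
move=> bc.
pose up := [set (y, parent a y) | y in [set~ a]].
pose down := [set (parent a y, y) | y in [set~ a]].
have up_down : up :&: down = set0.
  apply/setP => p; rewrite !inE; apply/negP => /andP[/imsetP[y ya ->] /imsetP[z za [yz zy]]].
  move: ya za; rewrite !in_setC1 => ya za.
  by have := proj2 (parentP ya); have := proj2 (parentP za); rewrite -yz zy; lia.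
have up_down_edges : up :|: down \subset [set p | e p.1 p.2].
  apply/subsetP => p; rewrite in_setU => /orP[] /imsetP[y]; rewrite in_setC1 => ya ->;
    by have [yp _] := parentP ya; rewrite inE //= e_sym.
have edgesE : up :|: down = [set p | e p.1 p.2].
  apply/eqP; rewrite eqEcard up_down_edges e_card cardsU up_down cards0 subn0.
  by rewrite !card_imset ?cardsC1 ?card_ord => [|y z []|y z []] //; lia.
have : (b, c) \in up :|: down by rewrite edgesE inE.
by rewrite in_setU => /orP[] /imsetP[y]; rewrite in_setC1 => ya [-> ->]; [left | right].
Qed.

Lemma dist_nbhd i j u : u \in nbhd e i ->
  D u j = if u == parent j i then (D i j).-1 else (D i j).+1.
Proof.
rewrite inE => iu; rewrite (distC e_sym e_conn u) (distC e_sym e_conn i).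
case: (edge_parent j iu) => [[ij ->] | [uj ip]].
  by rewrite eqxx -(proj2 (parentP ij)).
have [_ Du] := parentP uj; rewrite -ip in Du; rewrite -Du.
case: eqP => // u_ji; case: (eqVneq i j) => [ij | ij].
  by move: uj; rewrite u_ji ij parent_self eqxx.
by have [_] := parentP ij; rewrite -u_ji; lia.
Qed.

(* A vertex j at distance k - 1 from i is at distance k from every neighbour of
   i except the one towards j; for k = 1 (j = i) there is no exception. *)
Definition sphere_coef (k : nat) (i : 'I_L) : nat :=
  match k with 0 => 0 | 1 => deg e i | _ => (deg e i).-1 end.

Lemma sphere_count i j k :
  \sum_(u in nbhd e i) (D u j == k) = (D i j == k.+1) + sphere_coef k i * (D i j == k.-1).
Proof.
rewrite (eq_bigr (fun u =>
    (if u == parent j i then (D i j).-1 == k else (D i j).+1 == k) : nat)); last first.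
  by move=> u /dist_nbhd ->; case: ifP.
case: (eqVneq j i) => [-> | ji].
  rewrite parent_self (dist_refl e_conn).
  rewrite (eq_bigr (fun _ => (1 == k) : nat)) => [|u iu]; last first.
    by rewrite ifN //; apply: contraTneq iu => ->; rewrite inE e_irr.
  by rewrite sum_nat_const card_nbhd; case: k => [|[|k]] /=; lia.
have ij : i != j by rewrite eq_sym.
have [pi Dp] := parentP ij.
have p_nbhd : parent j i \in nbhd e i by rewrite inE e_sym.
rewrite (big_setD1 _ p_nbhd) eqxx /=.
rewrite (eq_bigr (fun _ => ((D i j).+1 == k) : nat)); last by move=> u /setD1P[/negPf ->].
have := cardsD1 (parent j i) (nbhd e i); rewrite p_nbhd card_nbhd sum_nat_const => /= deg_i.
have Dij : D i j != 0 by apply: contra ji => /eqP/(dist_eq0 e_conn)->.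
by case: k => [|[|k]] /=; lia.
Qed.

Local Open Scope ring_scope.

Definition sphere_sum (x : 'cV[R]_L) (k : nat) (i : 'I_L) : R :=
  \sum_j (D i j == k)%:R * x j ord0.

Lemma sphere_sum_rec x k i :
  \sum_(u in nbhd e i) sphere_sum x k u =
  sphere_sum x k.+1 i + (sphere_coef k i)%:R * sphere_sum x k.-1 i.
Proof.
rewrite /sphere_sum exchange_big mulr_sumr -big_split /=; apply: eq_bigr => j _.
by rewrite -mulr_suml -natr_sum sphere_count natrD natrM mulrDl mulrA.
Qed.

Lemma sphere_sum0 x i : sphere_sum x 0 i = x i ord0.
Proof.
rewrite /sphere_sum (bigD1 i) //= (dist_refl e_conn) mul1r big1 ?addr0 // => j ji.
have /negPf-> : D i j != 0%N by apply: contra ji => /eqP/(dist_eq0 e_conn) ->.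
by rewrite mul0r.
Qed.

Lemma dist_matrix_mul_sphere f x K i : (forall j, D i j <= K)%N ->
  (dist_matrix e f *m x) i ord0 = \sum_(k < K.+1) f k * sphere_sum x k i.
Proof.
move=> DK; rewrite mxE; under [RHS]eq_bigr do rewrite mulr_sumr.
rewrite exchange_big; apply: eq_bigr => j _ /=.
rewrite mxE (bigD1 (Ordinal (DK j : D i j < K.+1)%N)) //= eqxx mul1r big1 ?addr0 // => k.
by rewrite -val_eqE /= eq_sym => /negPf ->; rewrite mul0r mulr0.
Qed.
End Tree.

Section BalancedTree.
Variables (L : nat) (e : rel 'I_L).
Hypotheses (e_sym : symmetric e) (e_irr : irreflexive e).
Hypothesis e_conn : forall i j : 'I_L, connect e i j.
Hypothesis e_card : #|[set p : 'I_L * 'I_L | e p.1 p.2]| = (2 * L.-1)%N.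
Variables (r : 'I_L) (d : nat).
Hypothesis deg_r : 1 < deg e r.
Hypothesis leaf_depth : forall l : 'I_L, deg e l = 1 -> dist e r l = d.
Hypothesis deg_inner : forall v : 'I_L, v != r -> 1 < deg e v -> 2 < deg e v.
Local Notation D := (dist e).
Local Notation parent := (parent e).

Definition children v := nbhd e v :\ parent r v.
Definition level t := [set v | D r v == t].

Lemma mem_children v c : c \in children v -> parent r c = v /\ D r c = (D r v).+1.
Proof.
rewrite !inE => /andP[c_p vc].
case: (edge_parent e_sym e_conn e_card r vc) => [[_ cp] | [cr ->]].
  by rewrite cp eqxx in c_p.
by split=> //; rewrite -(proj2 (parentP e_conn cr)).
Qed.

Lemma children_card v : D r v != d -> 1 < #|children v|.
Proof.
move=> Dv; have := cardsD1 (parent r v) (nbhd e v); rewrite card_nbhd -/(children v).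
case: (eqVneq v r) => [-> | vr].
  by rewrite (parent_self e_conn) inE e_irr /= add0n => <-.
have [pv _] := parentP e_conn vr.
rewrite inE e_sym pv /= => deg_v.
have deg_v1 : deg e v != 1 by apply: contra Dv => /eqP/leaf_depth ->.
have : 2 < deg e v by apply: deg_inner vr _; rewrite ltn_neqAle eq_sym deg_v1 deg_v leq_addr.
by rewrite deg_v add1n ltnS.
Qed.

Lemma level_double t : t < d -> 2 * #|level t| <= #|level t.+1|.
Proof.
move=> td; rewrite -[#|level t.+1|]sum1_card.
rewrite (partition_big (parent r) (fun v => v \in level t)) /=; last first.
  move=> c; rewrite !inE => /eqP Dc.
  have cr : c != r by apply/eqP => cr; move: Dc; rewrite cr (dist_refl e_conn).
  by have [_] := parentP e_conn cr; rewrite Dc => -[->].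
rewrite mulnC -sum_nat_const; apply: leq_sum => v; rewrite inE => /eqP Dv.
have v_deg : 1 < #|children v| by apply: children_card; rewrite Dv neq_ltn td.
rewrite sum1dep_card; apply: leq_trans v_deg (subset_leq_card _).
by apply/subsetP => c /mem_children[pc Dc]; rewrite !inE Dc Dv pc !eqxx.
Qed.

(* A vertex below depth d has a child, so a deepest vertex is not below depth d. *)
Lemma depth_le v : D r v <= d.
Proof.
have [m _ m_max] := @arg_maxnP _ r xpredT (D r) isT.
apply: leq_trans (m_max v isT) _; rewrite leqNgt; apply/negP => dm.
have /card_gt0P[c /mem_children[_ Dc]] : 0 < #|children m|.
  by apply: ltnW (children_card _); rewrite neq_ltn dm orbT.
by have := m_max c isT; rewrite /= Dc ltnn.
Qed.

Lemma dist_le_diam i j : D i j <= 2 * d.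
Proof.
apply: leq_trans (dist_triangle e_conn i r j) _.
by rewrite (distC e_sym e_conn i r) mul2n -addnn leq_add ?depth_le.
Qed.

Lemma exp_depth_le : 2 ^ d <= L.
Proof.
suff level_ge t : t <= d -> 2 ^ t <= #|level t|.
  by apply: leq_trans (level_ge d (leqnn d)) (leq_trans (max_card _) _); rewrite card_ord.
elim: t => [|t IH] td.
  by rewrite card_gt0; apply/set0Pn; exists r; rewrite inE (dist_refl e_conn).
by rewrite expnS; apply: leq_trans (level_double td); rewrite leq_mul2l IH // ltnW.
Qed.
End BalancedTree.

(** * Straight-line programs *)

Definition last_reg (p : seq instr) : nat := (size p).-1.

(* Instruction number n writes register n.  A block is a list of instruction
   makers, each applied to the register written just before it. *)
Definition emit (ms : seq (nat -> instr)) (p : seq instr) : seq instr :=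
  foldl (fun q m => rcons q (m (last_reg q))) p ms.

Definition code_prefix (p q : seq instr) : Prop := exists t, q = p ++ t.

Lemma code_prefix_refl p : code_prefix p p.
Proof. by exists [::]; rewrite cats0. Qed.

Lemma code_prefix_trans p q s : code_prefix p q -> code_prefix q s -> code_prefix p s.
Proof. by move=> [t ->] [u ->]; exists (t ++ u); rewrite catA. Qed.

Lemma code_prefix_rcons p c : code_prefix p (rcons p c).
Proof. by exists [:: c]; rewrite cats1. Qed.

Lemma emit_cons m ms p : emit (m :: ms) p = emit ms (rcons p (m (last_reg p))).
Proof. by []. Qed.

Lemma size_emit ms p : size (emit ms p) = size p + size ms.
Proof.
elim: ms p => [|m ms IH] p; first by rewrite addn0.
by rewrite emit_cons IH size_rcons addSnnS.
Qed.

Lemma prefix_emit ms p : code_prefix p (emit ms p).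
Proof.
elim: ms p => [|m ms IH] p; first exact: code_prefix_refl.
exact: code_prefix_trans (code_prefix_rcons _ _) (IH _).
Qed.

Fixpoint emit_blocks T (ms : T -> seq (nat -> instr)) (s : seq T) (p : seq instr)
    : seq instr * seq nat :=
  if s is a :: s' then
    let q := emit (ms a) p in
    let r := emit_blocks ms s' q in (r.1, last_reg q :: r.2)
  else (p, [::]).

Section EmitBlocks.
Variables (T : Type) (ms : T -> seq (nat -> instr)).

Lemma size_emit_blocks s p :
  size (emit_blocks ms s p).1 = size p + \sum_(a <- s) size (ms a).
Proof.
elim: s p => [|a s IH] p /=; first by rewrite big_nil addn0.
by rewrite IH size_emit big_cons addnA.
Qed.

Lemma prefix_emit_blocks s p : code_prefix p (emit_blocks ms s p).1.
Proof.
elim: s p => [|a s IH] p /=; first exact: code_prefix_refl.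
exact: code_prefix_trans (prefix_emit _ _) (IH _).
Qed.
End EmitBlocks.

Definition add_block (rs : seq nat) : seq (nat -> instr) :=
  [seq (fun t => IAdd t r) | r <- rs].

Definition recur_block (rs : seq nat) (c : R) (b : nat) : seq (nat -> instr) :=
  (fun _ => IConst (- c)%R) :: (fun t => IMul t b) :: add_block rs.

Definition acc_block (k a b : nat) : seq (nat -> instr) :=
  [:: fun _ => IOracle k; fun t => IMul t b; fun t => IAdd t a].

Section Semantics.
Local Open Scope ring_scope.
Variables (L : nat) (f : nat -> R) (x : 'cV[R]_L).
Local Notation run := (run f x).

Lemma run_rcons p c : run (rcons p c) = rcons (run p) (exec_instr f x (run p) c).
Proof. exact: foldl_rcons. Qed.

Lemma size_run p : size (run p) = size p.
Proof. by elim/last_ind: p => [|p c IH] //; rewrite run_rcons !size_rcons IH. Qed.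

Lemma run_prefix p q : code_prefix p q -> exists t, run q = run p ++ t.
Proof.
case=> t ->; elim/last_ind: t => [|t c [u IH]]; first by exists [::]; rewrite !cats0.
rewrite -rcons_cat run_rcons IH.
by exists (rcons u (exec_instr f x (run p ++ u) c)); rewrite rcons_cat.
Qed.

Definition stores (p : seq instr) (a : nat) (v : R) : Prop :=
  (a < size p)%N /\ nth 0 (run p) a = v.

Definition yields (p : seq instr) (v : R) : Prop := stores p (last_reg p) v.

Lemma stores_prefix p q a v : code_prefix p q -> stores p a v -> stores q a v.
Proof.
move=> pq [ap <-]; have [t qt] := run_prefix pq.
by rewrite /stores -(size_run q) qt size_cat nth_cat size_run ap ltn_addr.
Qed.

Lemma yields_rcons p c : yields (rcons p c) (exec_instr f x (run p) c).
Proof.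
by rewrite /yields /stores /last_reg size_rcons /= run_rcons nth_rcons size_run ltnn eqxx.
Qed.

Lemma yields_input (i : 'I_L) p : yields (emit [:: fun _ => IInput i] p) (x i ord0).
Proof. by have := yields_rcons p (IInput i); rewrite /= valK. Qed.

Lemma yields_add_block (T : eqType) (s : seq T) (reg : T -> nat) (w : T -> R) p u :
  yields p u -> (forall a, a \in s -> stores p (reg a) (w a)) ->
  yields (emit (add_block [seq reg a | a <- s]) p) (u + \sum_(a <- s) w a).
Proof.
elim: s p u => [|a s IH] p u pu sw; first by rewrite big_nil addr0.
rewrite [add_block _]/= emit_cons big_cons addrA; apply: IH => [|b bs].
  have := yields_rcons p (IAdd (last_reg p) (reg a)).
  by rewrite /= pu.2 (sw a (mem_head _ _)).2.
by apply: stores_prefix (code_prefix_rcons _ _) (sw b _); rewrite inE bs orbT.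
Qed.

Lemma yields_recur_block (T : eqType) (s : seq T) (reg : T -> nat) (w : T -> R) c b v p :
  (forall a, a \in s -> stores p (reg a) (w a)) -> stores p b v ->
  yields (emit (recur_block [seq reg a | a <- s] c b) p) (\sum_(a <- s) w a - c * v).
Proof.
move=> sw pb; rewrite /recur_block !emit_cons addrC -mulNr.
set p1 := rcons p _; set p2 := rcons p1 _.
have y1 : yields p1 (- c) by apply: yields_rcons.
have y2 : yields p2 (- c * v).
  have := yields_rcons p1 (IMul (last_reg p1) b).
  by rewrite /= y1.2 (stores_prefix (code_prefix_rcons _ _) pb).2.
apply: yields_add_block y2 _ => a sa; apply: stores_prefix (sw a sa).
exact: code_prefix_trans (code_prefix_rcons _ _) (code_prefix_rcons _ _).
Qed.

Lemma yields_acc_block k a b u v p : stores p a u -> stores p b v ->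
  yields (emit (acc_block k a b) p) (f k * v + u).
Proof.
move=> pa pb; rewrite /acc_block !emit_cons.
set p1 := rcons p _; set p2 := rcons p1 _.
have p_p1 : code_prefix p p1 := code_prefix_rcons _ _.
have p_p2 : code_prefix p p2 := code_prefix_trans p_p1 (code_prefix_rcons _ _).
have y1 : yields p1 (f k) by apply: yields_rcons.
have y2 : yields p2 (f k * v).
  by have := yields_rcons p1 (IMul (last_reg p1) b); rewrite /= y1.2 (stores_prefix p_p1 pb).2.
by have := yields_rcons p2 (IAdd (last_reg p2) a); rewrite /= y2.2 (stores_prefix p_p2 pa).2.
Qed.

Lemma emit_blocks_stores (T : Type) (ms : T -> seq (nat -> instr)) (w : T -> R) s p k a0 :
  (forall a q, code_prefix p q -> yields (emit (ms a) q) (w a)) -> (k < size s)%N ->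
  stores (emit_blocks ms s p).1 (nth 0%N (emit_blocks ms s p).2 k) (w (nth a0 s k)).
Proof.
elim: s p k => [|a s IH] p // [|k] msw /= ks.
  apply: stores_prefix (prefix_emit_blocks _ _ _) (msw a _ (code_prefix_refl _)).
apply: IH => // b q pq; apply: msw; exact: code_prefix_trans (prefix_emit _ _) pq.
Qed.

Definition stores_table (p : seq instr) (rs : seq nat) (w : 'I_L -> R) : Prop :=
  forall i : 'I_L, stores p (nth 0%N rs i) (w i).

Lemma stores_table_prefix p q rs w :
  code_prefix p q -> stores_table p rs w -> stores_table q rs w.
Proof. by move=> pq pw i; apply: stores_prefix pq (pw i). Qed.

Lemma emit_blocks_table (ms : 'I_L -> seq (nat -> instr)) (w : 'I_L -> R) p :
  (forall i q, code_prefix p q -> yields (emit (ms i) q) (w i)) ->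
  stores_table (emit_blocks ms (enum 'I_L) p).1 (emit_blocks ms (enum 'I_L) p).2 w.
Proof.
move=> msw i; have := @emit_blocks_stores _ ms w (enum 'I_L) p i i msw.
by rewrite nth_ord_enum size_enum_ord ltn_ord; apply.
Qed.
End Semantics.

(** * The level-by-level program *)

Section Sweep.
Variables (L : nat) (e : rel 'I_L).

Record sweep_state := SweepState {
  sweep_code : seq instr;
  prev_regs : seq nat;
  cur_regs : seq nat;
  acc_regs : seq nat
}.

(* Register 0 holds the constant 0, the initial accumulator.  V_(-1) is
   represented by V_0: its coefficient sphere_coef 0 is 0. *)
Definition sweep_init : sweep_state :=
  let inputs :=
    emit_blocks (fun i : 'I_L => [:: fun _ => IInput i]) (enum 'I_L) [:: IConst 0%R] in
  let acc :=
    emit_blocks (fun i : 'I_L => acc_block 0 0 (nth 0 inputs.2 i)) (enum 'I_L) inputs.1 in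
  SweepState acc.1 inputs.2 inputs.2 acc.2.

Definition sweep_step (k : nat) (s : sweep_state) : sweep_state :=
  let next := emit_blocks (fun i : 'I_L =>
      recur_block [seq nth 0 (cur_regs s) u | u : 'I_L <- enum (nbhd e i)]
                  (sphere_coef e k i)%:R%R (nth 0 (prev_regs s) i))
    (enum 'I_L) (sweep_code s) in
  let acc := emit_blocks (fun i : 'I_L =>
      acc_block k.+1 (nth 0 (acc_regs s) i) (nth 0 next.2 i)) (enum 'I_L) next.1 in
  SweepState acc.1 (cur_regs s) next.2 acc.2.

Fixpoint sweep (k : nat) : sweep_state :=
  if k is k'.+1 then sweep_step k' (sweep k') else sweep_init.

Definition sweep_program (K : nat) : program L :=
  Program (sweep_code (sweep K)) (fun i => nth 0 (acc_regs (sweep K)) i).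

Lemma size_sweep K :
  size (sweep_code (sweep K)) = (4 * L).+1 + K * (\sum_i deg e i + 5 * L).
Proof.
elim: K => [|K IH] /=; rewrite !size_emit_blocks !big_enum /= !sum_nat_const card_ord.
  by rewrite addn0; lia.
under eq_bigr => i _ do rewrite /add_block !size_map -cardE card_nbhd -addn2.
rewrite IH big_split /= sum_nat_const card_ord.
rewrite (_ : \sum_(i in 'I_L) deg e i = \sum_i deg e i) //; lia.
Qed.

Hypotheses (e_sym : symmetric e) (e_irr : irreflexive e).
Hypothesis e_conn : forall i j : 'I_L, connect e i j.
Hypothesis e_card : #|[set p : 'I_L * 'I_L | e p.1 p.2]| = (2 * L.-1)%N.
Variables (f : nat -> R) (x : 'cV[R]_L).
Local Open Scope ring_scope.

Definition sweep_inv (k : nat) (s : sweep_state) : Prop :=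
  [/\ stores_table f x (sweep_code s) (prev_regs s) (sphere_sum e x k.-1),
      stores_table f x (sweep_code s) (cur_regs s) (sphere_sum e x k) &
      stores_table f x (sweep_code s) (acc_regs s)
        (fun i => \sum_(m < k.+1) f m * sphere_sum e x m i)].

Lemma sweep_inv_init : sweep_inv 0 sweep_init.
Proof.
rewrite /sweep_init; set inputs := emit_blocks _ _ [:: _]; set acc := emit_blocks _ _ inputs.1.
have inputs_acc : code_prefix inputs.1 acc.1 := prefix_emit_blocks _ _ _.
have zero : stores f x inputs.1 0 0.
  exact: stores_prefix (prefix_emit_blocks _ _ _) (yields_rcons f x [::] (IConst 0)).
have xs : stores_table f x inputs.1 inputs.2 (sphere_sum e x 0).
  by apply: emit_blocks_table => i q _; rewrite (sphere_sum0 e_conn); apply: yields_input.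
split; try exact: stores_table_prefix inputs_acc xs.
apply: emit_blocks_table => i q pq; rewrite big_ord1 -[_ * _]addr0.
by apply: yields_acc_block; [apply: stores_prefix pq zero | apply: stores_prefix pq (xs i)].
Qed.

Lemma sweep_inv_step k s : sweep_inv k s -> sweep_inv k.+1 (sweep_step k s).
Proof.
case=> prev cur acc; rewrite /sweep_step; set next := emit_blocks _ _ (sweep_code s).
set acc' := emit_blocks _ _ next.1.
have s_next : code_prefix (sweep_code s) next.1 := prefix_emit_blocks _ _ _.
have next_acc : code_prefix next.1 acc'.1 := prefix_emit_blocks _ _ _.
have nxt : stores_table f x next.1 next.2 (sphere_sum e x k.+1).
  apply: emit_blocks_table => i q sq.
  rewrite -[sphere_sum _ _ _ i](addrK ((sphere_coef e k i)%:R * sphere_sum e x k.-1 i)).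
  rewrite -(sphere_sum_rec e_sym e_irr e_conn e_card) -big_enum.
  by apply: yields_recur_block => [u _ |]; apply: stores_prefix sq _.
split => /=; try exact: stores_table_prefix next_acc _.
  exact: stores_table_prefix (code_prefix_trans s_next next_acc) cur.
apply: emit_blocks_table => i q nq; rewrite big_ord_recr /= addrC.
apply: yields_acc_block; last exact: stores_prefix nq (nxt i).
exact: stores_prefix (code_prefix_trans s_next nq) (acc i).
Qed.

Lemma sweep_invP K : sweep_inv K (sweep K).
Proof. by elim: K => [|K IH]; [apply: sweep_inv_init | apply: sweep_inv_step]. Qed.

Lemma sweep_program_correct K : (forall i j, dist e i j <= K)%N ->
  prog_eval (sweep_program K) f x = dist_matrix e f *m x.
Proof.
move=> diam; apply/matrixP => i j; rewrite (ord1 j) /prog_eval mxE.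
rewrite (dist_matrix_mul_sphere f x (diam i)).
by have [_ _ acc] := sweep_invP K; apply: (acc i).2.
Qed.
End Sweep.

Local Open Scope ring_scope.

Theorem corollary6p3 :
  exists C : nat,
  forall (L : nat) (e : rel 'I_L),
    is_tree e ->
    (exists r : 'I_L,
       (2 <= deg e r)%N /\
       (exists d : nat, forall l : 'I_L, deg e l = 1%N -> dist e r l = d) /\
       (forall v : 'I_L, v != r -> (2 <= deg e v)%N -> (3 <= deg e v)%N)) ->
    exists P : program L,
      (prog_size P <= C * (L * up_log 2 L))%N /\
      forall (f : nat -> R) (x : 'cV[R]_L),
        prog_eval P f x = dist_matrix e f *m x.
Proof.
exists 19%N => L e [[e_sym e_irr] [e_conn e_card]] [r [deg_r [[d leaf_d] deg_inner]]].
have L_gt1 : (1 < L)%N by apply: leq_trans deg_r (leq_trans (max_card _) _); rewrite card_ord.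
have d_log : (d <= up_log 2 L)%N.
  rewrite -[d](up_expnK d (isT : 1 < 2)%N) leq_up_log //.
  exact (exp_depth_le e_sym e_irr e_conn e_card deg_r leaf_d deg_inner).
exists (sweep_program e (2 * d)); split.
  rewrite /prog_size size_sweep sum_deg e_card.
  have : (0 < up_log 2 L)%N by rewrite up_log_gt0.
  nia.
move=> f x; apply: (sweep_program_correct e_sym e_irr e_conn e_card) => i j.
exact (dist_le_diam e_sym e_irr e_conn e_card deg_r leaf_d deg_inner i j).
Qed.
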